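(* Let $F$ be a minimally unsatisfiable clause-set and $v$ a singular variable for $F$ with singular literal $x$, main clause $C$ and side clauses $D_1,\dots,D_m$. Let $F'$ be obtained from $F$ by replacing each $D_i$ by $D_i \cup (C\setminus\{x\})$ ($i=1,\dots,m$). Then each $D_i\cup(C\setminus\{x\})$ is a clause (contains no complementary pair), and $F'$ is a partial saturation of $F$.
   Context: Literals are variables $v$ and complements $\overline{v}$; a clause is a finite set of literals with no complementary pair; a clause-set is a finite set of clauses; $\mathrm{var}(F)$ is the set of variables of $F$; $\mathrm{ldeg}_F(x)$ is the number of clauses of $F$ containing literal $x$. $\mathrm{MU}$ is the set of minimally unsatisfiable clause-sets. A variable $v$ is singular for $F$ if $\min(\mathrm{ldeg}_F(v),\mathrm{ldeg}_F(\overline{v}))=1$; a singular literal for $v$ is a literal $x$ with $\mathrm{var}(x)=v$ and $\mathrm{ldeg}_F(x)=1$ (if both polarities qualify, one is chosen); the main clause is the unique $C\in F$ with $x\in C$, and the side clauses are the clauses $D\in F$ with $\overline{x}\in D$. A partial saturation of $F\in\mathrm{MU}$ is a clause-set $F'\in\mathrm{MU}$ with $\mathrm{var}(F')=\mathrm{var}(F)$ such that there is a bijection $\alpha:F\to F'$ with $C\subseteq\alpha(C)$ for all $C\in F$. *)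

From HB Require Import structures.
From mathcomp Require Import all_boot.
From mathcomp Require Import finmap.

Set Implicit Arguments.
Unset Strict Implicit.
Unset Printing Implicit Defensive.

Local Open Scope fset_scope.

(* Variables are natural numbers; a literal is a pair (v, b):
   (v, true) is the positive literal v, (v, false) its complement. *)
Definition var := nat.
Definition lit := (nat * bool)%type.

Definition var_of (l : lit) : var := l.1.
Definition compl (l : lit) : lit := (l.1, ~~ l.2).

Definition is_clause (C : {fset lit}) : Prop :=
  forall l, l \in C -> compl l \notin C.

Definition is_clause_set (F : {fset {fset lit}}) : Prop :=
  forall C, C \in F -> is_clause C.

Definition var_in (F : {fset {fset lit}}) (v : var) : Prop :=
  exists2 C, C \in F & exists2 l, l \in C & var_of l = v.

Definition ldeg (F : {fset {fset lit}}) (x : lit) : nat :=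
  #|` [fset C in F | x \in C] |.

Definition sat (F : {fset {fset lit}}) : Prop :=
  exists phi : var -> bool,
    forall C, C \in F -> exists2 l, l \in C & phi l.1 = l.2.

Definition MU (F : {fset {fset lit}}) : Prop :=
  [/\ is_clause_set F, ~ sat F & forall C, C \in F -> sat (F `\ C)].

Definition singular (F : {fset {fset lit}}) (v : var) : Prop :=
  minn (ldeg F (v, true)) (ldeg F (v, false)) = 1.

Definition side_clauses (F : {fset {fset lit}}) (x : lit) : {fset {fset lit}} :=
  [fset D in F | compl x \in D].

Definition partial_saturation (F F' : {fset {fset lit}}) : Prop :=
  [/\ MU F',
      (forall v, var_in F' v <-> var_in F v) &
      exists alpha : {fset lit} -> {fset lit},
        [/\ {in F &, injective alpha},
            [fset alpha C | C in F] = F' &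
            forall C, C \in F -> C `<=` alpha C]].

From HB Require Import structures.
From mathcomp Require Import all_boot.
From mathcomp Require Import finmap.

Set Implicit Arguments.
Unset Strict Implicit.
Unset Printing Implicit Defensive.

Local Open Scope fset_scope.

(* If an assignment makes a literal of C \ {x} true, then re-assigning the
   variable of x so that the complement of x becomes true keeps C true (the
   variable of x occurs in C only through x), makes every side clause true, and
   keeps true every other clause, since x occurs in no clause but C. So for a
   side clause D, an assignment satisfying F \ {D} (which exists by minimality
   and falsifies D) also falsifies C \ {x}: it falsifies all of D u (C \ {x}),
   which therefore has no complementary pair, and it satisfies every other
   extended clause, which gives injectivity of the extension map and minimality
   of F'. Conversely, an assignment satisfying F' either satisfies F directly
   or makes a literal of C \ {x} true and then, after the re-assignment,
   satisfies F; hence F' is unsatisfiable. *)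

Definition lit_true (phi : var -> bool) (l : lit) : bool := phi l.1 == l.2.

Definition sat_by (phi : var -> bool) (F : {fset {fset lit}}) : Prop :=
  forall E, E \in F -> exists2 l, l \in E & lit_true phi l.

Lemma sat_byP F : sat F <-> exists phi, sat_by phi F.
Proof.
split=> [[phi Hphi] | [phi Hphi]]; exists phi => E /[dup] EF.
  by move/Hphi=> [l lE /eqP]; exists l.
by move/Hphi=> [l lE /eqP]; exists l.
Qed.

Lemma lit_true_compl phi l : lit_true phi (compl l) = ~~ lit_true phi l.
Proof. by case: l => a [] /=; rewrite /lit_true /=; case: (phi a). Qed.

Lemma lit_same_var (l x : lit) : l.1 = x.1 -> l != x -> l = compl x.
Proof. by case: l x => a [] [c []] /= ->; rewrite ?eqxx. Qed.

Definition assign_lit (phi : var -> bool) (x : lit) : var -> bool :=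
  fun u => if u == x.1 then x.2 else phi u.

Lemma lit_true_assign_lit phi x : lit_true (assign_lit phi x) x.
Proof. by rewrite /lit_true /assign_lit eqxx. Qed.

Lemma lit_true_assign_lit_other phi x l :
  l.1 != x.1 -> lit_true (assign_lit phi x) l = lit_true phi l.
Proof. by rewrite /lit_true /assign_lit => /negbTE ->. Qed.

Lemma is_clause_of_falsified phi E :
  (forall l, l \in E -> ~~ lit_true phi l) -> is_clause E.
Proof.
move=> Hfalse l lE; apply/negP => /Hfalse.
by rewrite lit_true_compl (negbTE (Hfalse l lE)).
Qed.

Lemma ldeg1_occurs_once F x C E :
  ldeg F x = 1 -> C \in F -> x \in C -> E \in F -> x \in E -> E = C.
Proof.
rewrite /ldeg => deg1 CF xC EF xE; apply/eqP/negPn/negP => nEC.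
have CFx : C \in [fset D in F | x \in D] by rewrite !inE CF xC.
move: deg1; rewrite (cardfsD1 C) CFx => -[/cardfs0_eq Fx0].
have : E \in [fset D in F | x \in D] `\ C by rewrite !inE nEC EF xE.
by rewrite Fx0 inE.
Qed.

Lemma sat_by_superclauses (alpha : {fset lit} -> {fset lit}) phi F E :
  {in F &, injective alpha} -> (forall G, G `<=` alpha G) -> E \in F ->
  sat_by phi (F `\ E) -> sat_by phi ([fset alpha G | G in F] `\ alpha E).
Proof.
move=> alpha_inj subA EF Hphi G' /fsetD1P [nGE /imfsetP [G GF eG]].
rewrite {G'}eG in nGE *.
have : G \in F `\ E.
  by rewrite in_fsetD1 GF andbT; apply: contraNneq nGE => ->.
by move/Hphi=> [l lG tl]; exists l => //; apply: (fsubsetP (subA G)).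
Qed.

Section SingularExtension.

Variables (F : {fset {fset lit}}) (x : lit) (C : {fset lit}).

Definition extend_side (E : {fset lit}) : {fset lit} :=
  if compl x \in E then E `|` (C `\ x) else E.

Lemma extend_side_sub E : E `<=` extend_side E.
Proof. by rewrite /extend_side; case: ifP => _; rewrite ?fsubsetUl. Qed.

Lemma imfset_extend_side :
  [fset extend_side E | E in F] =
  (F `\` side_clauses F x) `|` [fset D `|` (C `\ x) | D in side_clauses F x].
Proof.
apply/fsetP => y; rewrite in_fsetU in_fsetD; apply/imfsetP/orP.
- move=> [E EF ->]; rewrite /extend_side; case: ifP => cxE.
    by right; apply/imfsetP; exists E => //; rewrite !inE EF cxE.
  by left; rewrite !inE EF cxE.
- move=> [/andP [yS yF] | /imfsetP [D DS ->]].
    exists y => //; rewrite /extend_side; case: ifP => // cxy.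
    by move: yS; rewrite !inE yF cxy.
  by move: DS; rewrite !inE => /andP [DF cxD]; exists D; rewrite /extend_side ?cxD.
Qed.

Lemma var_in_imfset_extend_side w :
  C \in F -> var_in [fset extend_side E | E in F] w <-> var_in F w.
Proof.
move=> CF; split.
- move=> [_ /imfsetP [E EF ->] [l]]; rewrite /extend_side.
  case: ifP => _ lE wl; last by exists E => //; exists l.
  move: lE; rewrite in_fsetU in_fsetD1 => /orP [lE | /andP [_ lC]].
    by exists E => //; exists l.
  by exists C => //; exists l.
- move=> [E EF [l lE wl]]; exists (extend_side E); first exact: in_imfset.
  by exists l => //; apply: (fsubsetP (extend_side_sub E)).
Qed.

Hypotheses (HF : is_clause_set F) (F_unsat : ~ sat F)
  (C_in : C \in F) (x_in_C : x \in C)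
  (x_only_in_C : forall E, E \in F -> x \in E -> E = C).

Lemma var_neq_of_in_C_x l : l \in C `\ x -> l.1 != x.1.
Proof.
rewrite in_fsetD1 => /andP [nlx lC]; apply/eqP => /lit_same_var /(_ nlx) lcx.
by move: (HF C_in x_in_C); rewrite -lcx lC.
Qed.

Lemma sat_by_flip phi l0 : l0 \in C `\ x -> lit_true phi l0 ->
  (forall E, E \in F -> E != C -> compl x \notin E ->
     exists2 l, l \in E & lit_true phi l) ->
  sat F.
Proof.
move=> l0C tl0 Hphi; apply/sat_byP; exists (assign_lit phi (compl x)) => E EF.
have [-> | nEC] := eqVneq E C.
  exists l0; first by move: l0C; rewrite in_fsetD1 => /andP [].
  by rewrite lit_true_assign_lit_other // var_neq_of_in_C_x.
have [cxE | ncxE] := boolP (compl x \in E).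
  by exists (compl x) => //; apply: lit_true_assign_lit.
have [l lE tl] := Hphi E EF nEC ncxE.
exists l => //; rewrite lit_true_assign_lit_other //; apply/eqP => lx.
have [lex | nlx] := eqVneq l x.
  by move: nEC; rewrite (x_only_in_C EF) ?eqxx // -lex.
by move: ncxE; rewrite -(@lit_same_var l x lx nlx) lE.
Qed.

Hypothesis F_min : forall E, E \in F -> sat (F `\ E).

Lemma side_clause_witness D : D \in F -> compl x \in D ->
  exists psi, sat_by psi (F `\ D) /\
              forall l, l \in D `|` (C `\ x) -> ~~ lit_true psi l.
Proof.
move=> DF cxD; have /sat_byP [psi Hpsi] := F_min DF.
exists psi; split=> // l; rewrite in_fsetU => /orP [lD | lC]; apply/negP => tl.
- apply: F_unsat; apply/sat_byP; exists psi => E EF.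
  have [-> | nED] := eqVneq E D; first by exists l.
  by apply: Hpsi; rewrite in_fsetD1 nED EF.
- apply: F_unsat; apply: (sat_by_flip lC tl) => E EF _ ncxE.
  by apply: Hpsi; rewrite in_fsetD1 EF andbT; apply: contraNneq ncxE => ->.
Qed.

Lemma is_clause_extend_side D : D \in F -> is_clause (extend_side D).
Proof.
move=> DF; rewrite /extend_side; case: ifPn => [cxD | _]; last exact: HF.
by have [psi [_ Hfalse]] := side_clause_witness DF cxD; apply: is_clause_of_falsified Hfalse.
Qed.

Lemma compl_x_in_extend_side E : (compl x \in extend_side E) = (compl x \in E).
Proof.
rewrite /extend_side; case: ifP => // cxE.
by rewrite in_fsetU in_fsetD1 (negbTE (HF C_in x_in_C)) andbF orbF cxE.
Qed.

Lemma extend_side_inj : {in F &, injective extend_side}.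
Proof.
move=> D1 D2 D1F D2F e12; apply/eqP/negPn/negP => nD12.
have cx21 : (compl x \in D2) = (compl x \in D1).
  by rewrite -[LHS]compl_x_in_extend_side -e12 compl_x_in_extend_side.
move: e12; rewrite /extend_side -cx21.
case: ifP => [cx2 e12 | _ e12]; last by rewrite e12 eqxx in nD12.
have cx1 : compl x \in D1 by rewrite -cx21.
have [psi [Hpsi Hfalse]] := side_clause_witness D1F cx1.
have [l lD2 tl] : exists2 l, l \in D2 & lit_true psi l.
  by apply: Hpsi; rewrite in_fsetD1 D2F eq_sym nD12.
by move: (Hfalse l); rewrite e12 in_fsetU lD2 tl => /(_ isT).
Qed.

Lemma imfset_extend_side_unsat : ~ sat [fset extend_side E | E in F].
Proof.
move/sat_byP=> [phi Hphi].
have Hext E : E \in F -> exists2 l, l \in extend_side E & lit_true phi l.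
  by move=> EF; apply: Hphi; apply: in_imfset.
have [/hasP [l0 l0C tl0] | noC] := boolP (has (lit_true phi) (C `\ x)).
  apply: F_unsat; apply: (sat_by_flip l0C tl0) => E EF _ /negbTE ncxE.
  by have := Hext E EF; rewrite /extend_side ncxE.
apply: F_unsat; apply/sat_byP; exists phi => E EF.
have [l] := Hext E EF; rewrite /extend_side; case: ifP => _ lE tl; last by exists l.
move: lE; rewrite in_fsetU => /orP [lE | lC]; first by exists l.
by move/hasP: noC; case; exists l.
Qed.

End SingularExtension.

Theorem corollary11 (F : {fset {fset lit}}) (v : var) (x : lit) (C : {fset lit}) :
  MU F ->
  singular F v ->
  var_of x = v -> ldeg F x = 1 ->
  C \in F -> x \in C ->
  let F' := (F `\` side_clauses F x) `|`
            [fset D `|` (C `\ x) | D in side_clauses F x] in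
  (forall D, D \in side_clauses F x -> is_clause (D `|` (C `\ x))) /\
  partial_saturation F F'.
Proof.
(* Singularity of v is only the context of ldeg F x = 1, which is all we use. *)
move=> [HF F_unsat F_min] _ _ deg1 C_in x_in_C F'.
have x_only_in_C := ldeg1_occurs_once deg1 C_in x_in_C.
have clause_ext := is_clause_extend_side HF F_unsat C_in x_in_C x_only_in_C F_min.
have ext_inj := extend_side_inj HF F_unsat C_in x_in_C x_only_in_C F_min.
split.
  move=> D; rewrite !inE => /andP [DF cxD].
  by have := clause_ext D DF; rewrite /extend_side cxD.
rewrite /partial_saturation /F' -imfset_extend_side; split.
- split.
  + by move=> _ /imfsetP [E EF ->]; apply: clause_ext.
  + exact: imfset_extend_side_unsat.
  + move=> _ /imfsetP [E EF ->]; have /sat_byP [psi Hpsi] := F_min E EF.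
    apply/sat_byP; exists psi.
    exact: sat_by_superclauses ext_inj (@extend_side_sub x C) EF Hpsi.
- by move=> w; apply: var_in_imfset_extend_side.
- by exists (extend_side x C); split=> // E _; apply: extend_side_sub.
Qed.
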